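(* Let $\mathfrak{n}$ be the real $7$-dimensional Lie algebra with basis $e_1,\dots,e_7$ whose nonzero brackets (up to antisymmetry) are $[e_1,e_2]=e_3$, $[e_1,e_3]=e_4$, $[e_1,e_4]=e_6$, $[e_2,e_3]=e_5$, $[e_2,e_5]=-e_7$, $[e_2,e_6]=-e_7$, $[e_3,e_4]=e_7$. Then $\mathfrak{n}$ is an Einstein nilradical.
   Context: A real nilpotent Lie algebra $\mathfrak{n}$ is called an Einstein nilradical if it admits an inner product such that the left-invariant Riemannian metric it defines on the simply connected nilpotent Lie group with Lie algebra $\mathfrak{n}$ is a nilsoliton, i.e. its Ricci operator satisfies $\mathrm{Ric}=c\,\mathrm{Id}+D$ for some $c\in\mathbb{R}$ and some derivation $D$ of $\mathfrak{n}$. Brackets of basis elements not listed are zero. *)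

(* Real Lie algebras on R^n (row vectors 'rV[R]_n) given by
   structure constants, left-invariant metrics given by an inner product. *)
From HB Require Import structures.
From mathcomp Require Import all_boot all_order all_algebra.
From mathcomp Require Import reals.
Set Implicit Arguments. Unset Strict Implicit. Unset Printing Implicit Defensive.
Import Order.TTheory GRing.Theory Num.Theory.
Local Open Scope ring_scope.

Section MetricLie.
Variable R : realType.

Definition bvec n (i : 'I_n) : 'rV[R]_n := delta_mx 0 i.

Definition lbr n (c : 'I_n -> 'I_n -> 'rV[R]_n) (u v : 'rV[R]_n) : 'rV[R]_n :=
  \sum_(i < n) \sum_(j < n) (u 0 i * v 0 j) *: c i j.

Definition is_lie n (c : 'I_n -> 'I_n -> 'rV[R]_n) : Prop :=
  (forall u, lbr c u u = 0) /\
  (forall u v w, lbr c u (lbr c v w) + lbr c v (lbr c w u) + lbr c w (lbr c u v) = 0).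

Fixpoint itbr n (c : 'I_n -> 'I_n -> 'rV[R]_n) (s : seq 'rV[R]_n) (y : 'rV[R]_n) :=
  if s is x :: s' then lbr c x (itbr c s' y) else y.

Definition is_nilpotent n (c : 'I_n -> 'I_n -> 'rV[R]_n) : Prop :=
  exists k : nat, forall (s : seq 'rV[R]_n) y, size s = k -> itbr c s y = 0.

Definition ip n (G : 'M[R]_n) (u v : 'rV[R]_n) : R := (u *m G *m v^T) 0 0.

Definition posdef n (G : 'M[R]_n) : Prop :=
  G^T = G /\ forall v : 'rV[R]_n, v != 0 -> 0 < ip G v v.

Definition orthonormal_basis n (G B : 'M[R]_n) : Prop := B *m G *m B^T = 1%:M.

(* matrix of ad X, acting on row vectors from the right: e_i *m adm X = [X,e_i] *)
Definition adm n (c : 'I_n -> 'I_n -> 'rV[R]_n) (X : 'rV[R]_n) : 'M[R]_n :=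
  \matrix_(i < n, j < n) (lbr c X (bvec i)) 0 j.

Definition killing n (c : 'I_n -> 'I_n -> 'rV[R]_n) (X Y : 'rV[R]_n) : R :=
  \tr (adm c X *m adm c Y).

(* mean curvature vector H: <H,X> = tr ad X *)
Definition meanH n (G B : 'M[R]_n) (c : 'I_n -> 'I_n -> 'rV[R]_n) : 'rV[R]_n :=
  \sum_(i < n) (\tr (adm c (row i B))) *: row i B.

(* Ricci form of the left-invariant metric (Besse, Einstein Manifolds, 7.38),
   computed in the G-orthonormal basis given by the rows of B:
   ric(X,Y) = -1/2 sum_i <[X,X_i],[Y,X_i]> - 1/2 B(X,Y)
              + 1/4 sum_{i,j} <[X_i,X_j],X><[X_i,X_j],Y>
              - 1/2 (<[H,X],Y> + <[H,Y],X>). *)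
Definition ric n (G B : 'M[R]_n) (c : 'I_n -> 'I_n -> 'rV[R]_n) (X Y : 'rV[R]_n) : R :=
  - (1/2) * (\sum_(i < n) ip G (lbr c X (row i B)) (lbr c Y (row i B)))
  - (1/2) * killing c X Y
  + (1/4) * (\sum_(i < n) \sum_(j < n)
               ip G (lbr c (row i B) (row j B)) X * ip G (lbr c (row i B) (row j B)) Y)
  - (1/2) * (ip G (lbr c (meanH G B c) X) Y + ip G (lbr c (meanH G B c) Y) X).

Definition is_ricci_op n (G B : 'M[R]_n) (c : 'I_n -> 'I_n -> 'rV[R]_n) (Ric : 'M[R]_n) : Prop :=
  forall X Y : 'rV[R]_n, ip G (X *m Ric) Y = ric G B c X Y.

Definition is_derivation n (c : 'I_n -> 'I_n -> 'rV[R]_n) (D : 'M[R]_n) : Prop :=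
  forall u v : 'rV[R]_n, lbr c u v *m D = lbr c (u *m D) v + lbr c u (v *m D).

Definition is_nilsoliton n (G B : 'M[R]_n) (c : 'I_n -> 'I_n -> 'rV[R]_n) : Prop :=
  exists (Ric : 'M[R]_n) (cc : R) (D : 'M[R]_n),
    is_ricci_op G B c Ric /\ is_derivation c D /\ Ric = cc%:M + D.

Definition einstein_nilradical n (c : 'I_n -> 'I_n -> 'rV[R]_n) : Prop :=
  is_lie c /\ is_nilpotent c /\
  exists G B : 'M[R]_n, posdef G /\ orthonormal_basis G B /\ is_nilsoliton G B c.

(* The specific 7-dimensional algebra; index k stands for e_{k+1}. *)
Definition e7 (k : nat) : 'rV[R]_7 := bvec (inord k : 'I_7).

Definition up7 (i j : nat) : 'rV[R]_7 :=
  match i, j with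
  | 0, 1 => e7 2
  | 0, 2 => e7 3
  | 0, 3 => e7 5
  | 1, 2 => e7 4
  | 1, 4 => - e7 6
  | 1, 5 => - e7 6
  | 2, 3 => e7 6
  | _, _ => 0
  end.

Definition n7 (i j : 'I_7) : 'rV[R]_7 :=
  if (i < j)%N then up7 i j else if (j < i)%N then - up7 j i else 0.

End MetricLie.

From HB Require Import structures.
From mathcomp Require Import all_boot all_order all_algebra.
From mathcomp Require Import reals.
From mathcomp Require Import ring lra zify.
Set Implicit Arguments. Unset Strict Implicit. Unset Printing Implicit Defensive.
Import Order.TTheory GRing.Theory Num.Theory.
Local Open Scope ring_scope.

(* The bracket is graded by the weights (1,2,3,4,5,5,7) of e1, ..., e7: [e_i, e_j] has
   weight w_i + w_j.  Hence n is nilpotent, every ad X strictly raises weights (so the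
   Killing form and the mean curvature vector vanish), and t diag(w) is a derivation.
   The nilsoliton metric makes the frame v = (e1, e2, e3, e4, e6, e5 + mu e6, e7)
   orthogonal with |v_i|^2 = 1/x_i; the v_i are eigenvectors of c Id + t diag(w), and the
   Ricci form becomes a quadratic expression in the structure constants of the frame, so
   Ric = c Id + t diag(w) reduces to finitely many numerical identities. *)

Section Bracket.
Variables (R : realType) (n : nat) (c : 'I_n -> 'I_n -> 'rV[R]_n).

Lemma lbrE u v k : lbr c u v 0 k = \sum_i \sum_j u 0 i * v 0 j * c i j 0 k.
Proof.
rewrite /lbr summxE; apply: eq_bigr => i _; rewrite summxE.
by apply: eq_bigr => j _; rewrite mxE.
Qed.

Lemma lbrZl a u v : lbr c (a *: u) v = a *: lbr c u v.
Proof.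
rewrite /lbr scaler_sumr; apply: eq_bigr => i _; rewrite scaler_sumr.
by apply: eq_bigr => j _; rewrite mxE scalerA mulrA.
Qed.

Lemma lbrZr a u v : lbr c u (a *: v) = a *: lbr c u v.
Proof.
rewrite /lbr scaler_sumr; apply: eq_bigr => i _; rewrite scaler_sumr.
by apply: eq_bigr => j _; rewrite mxE scalerA mulrCA.
Qed.

Lemma lbr0l v : lbr c 0 v = 0.
Proof. by have := lbrZl 0 0 v; rewrite !scale0r. Qed.

Lemma lbr0r u : lbr c u 0 = 0.
Proof. by have := lbrZr 0 u 0; rewrite !scale0r. Qed.

Lemma lbrDl u1 u2 v : lbr c (u1 + u2) v = lbr c u1 v + lbr c u2 v.
Proof.
rewrite /lbr -big_split; apply: eq_bigr => i _; rewrite -big_split.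
by apply: eq_bigr => j _; rewrite mxE mulrDl scalerDl.
Qed.

Lemma lbrDr u v1 v2 : lbr c u (v1 + v2) = lbr c u v1 + lbr c u v2.
Proof.
rewrite /lbr -big_split; apply: eq_bigr => i _; rewrite -big_split.
by apply: eq_bigr => j _; rewrite mxE mulrDr scalerDl.
Qed.

Lemma lbr_suml I r (P : pred I) (F : I -> 'rV[R]_n) v :
  lbr c (\sum_(a <- r | P a) F a) v = \sum_(a <- r | P a) lbr c (F a) v.
Proof. exact: (big_morph (lbr c ^~ v) (fun u1 u2 => lbrDl u1 u2 v) (lbr0l v)). Qed.

Lemma lbr_sumr I r (P : pred I) u (F : I -> 'rV[R]_n) :
  lbr c u (\sum_(b <- r | P b) F b) = \sum_(b <- r | P b) lbr c u (F b).
Proof. exact: (big_morph (lbr c u) (lbrDr u) (lbr0r u)). Qed.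

Lemma lbr_mulmx p q (V : 'M[R]_n) :
  lbr c (p *m V) (q *m V) = \sum_a \sum_b (p 0 a * q 0 b) *: lbr c (row a V) (row b V).
Proof.
rewrite !mulmx_sum_row lbr_suml; apply: eq_bigr => a _.
rewrite lbrZl lbr_sumr scaler_sumr; apply: eq_bigr => b _.
by rewrite lbrZr scalerA.
Qed.

End Bracket.

Section InnerProduct.
Variables (R : realType) (n : nat) (G : 'M[R]_n).

Lemma ipZl a u v : ip G (a *: u) v = a * ip G u v.
Proof. by rewrite /ip -!scalemxAl mxE. Qed.

Lemma ipZr a u v : ip G u (a *: v) = a * ip G u v.
Proof. by rewrite /ip linearZ /= -scalemxAr mxE. Qed.

Lemma ip0l v : ip G 0 v = 0.
Proof. by have := ipZl 0 0 v; rewrite scale0r mul0r. Qed.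

End InnerProduct.

Section Graded.
Variables (R : realType) (n : nat) (c : 'I_n -> 'I_n -> 'rV[R]_n) (w : 'I_n -> nat).
Hypothesis w_gt0 : forall k, (0 < w k)%N.
Hypothesis c_graded : forall i j k, c i j 0 k != 0 -> w k = (w i + w j)%N.

Definition vanishes_below m (v : 'rV[R]_n) := forall k, (w k < m)%N -> v 0 k = 0.

Lemma lbr_vanishes_below m u v : vanishes_below m v -> vanishes_below m.+1 (lbr c u v).
Proof.
move=> v0 k wk; rewrite lbrE big1 // => i _; rewrite big1 // => j _.
have [-> | /c_graded wkij] := eqVneq (c i j 0 k) 0; first by rewrite mulr0.
by rewrite v0 ?mulr0 ?mul0r //; have := w_gt0 i; lia.
Qed.

Lemma bvec_vanishes_below i : vanishes_below (w i) (bvec R i).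
Proof. by move=> k wk; rewrite mxE eqxx; case: eqP => // eki; rewrite eki ltnn in wk. Qed.

Lemma adm_eq0 X i j : (w j <= w i)%N -> adm c X i j = 0.
Proof. by move=> wji; rewrite mxE (lbr_vanishes_below X (@bvec_vanishes_below i)). Qed.

Lemma tr_adm0 X : \tr (adm c X) = 0.
Proof. by rewrite /mxtrace big1 // => i _; rewrite adm_eq0. Qed.

Lemma killing0 X Y : killing c X Y = 0.
Proof.
rewrite /killing /mxtrace big1 // => i _; rewrite mxE big1 // => j _.
by case: (leqP (w j) (w i)) => [/adm_eq0 -> | /ltnW /adm_eq0 ->]; rewrite ?mul0r ?mulr0.
Qed.

Lemma meanH0 G B : meanH G B c = 0.
Proof. by rewrite /meanH big1 // => i _; rewrite tr_adm0 scale0r. Qed.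

Lemma itbr_vanishes_below s y : vanishes_below (size s) (itbr c s y).
Proof. by elim: s => [//|u s IH] /=; apply: lbr_vanishes_below. Qed.

Lemma graded_nilpotent : is_nilpotent c.
Proof.
exists (\max_k w k).+1 => s y size_s; apply/rowP => k.
by rewrite mxE itbr_vanishes_below // size_s ltnS leq_bigmax.
Qed.

Lemma graded_derivation (t : R) : is_derivation c (diag_mx (\row_k (t * (w k)%:R))).
Proof.
move=> u v; apply/rowP => k; rewrite !mul_mx_diag !mxE !lbrE mulr_suml -big_split /=.
apply: eq_bigr => i _; rewrite mulr_suml -big_split /=; apply: eq_bigr => j _; rewrite !mxE.
have [-> | /c_graded ->] := eqVneq (c i j 0 k) 0; first by rewrite !(mulr0, mul0r, addr0).
by rewrite natrD; ring.
Qed.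

End Graded.

Section Ricci.
Variables (R : realType) (n : nat) (c : 'I_n -> 'I_n -> 'rV[R]_n) (w : 'I_n -> nat).
Hypothesis w_gt0 : forall k, (0 < w k)%N.
Hypothesis c_graded : forall i j k, c i j 0 k != 0 -> w k = (w i + w j)%N.
Variables (G V : 'M[R]_n) (x : 'I_n -> R).
Hypothesis x_ge0 : forall i, 0 <= x i.

Let B := diag_mx (\row_i Num.sqrt (x i)) *m V.

Lemma row_scaled_basis i : row i B = Num.sqrt (x i) *: row i V.
Proof. by apply/rowP => j; rewrite /B mul_diag_mx !mxE. Qed.

Lemma ric_scaled_basis X Y : ric G B c X Y =
  - (1/2) * (\sum_i x i * ip G (lbr c X (row i V)) (lbr c Y (row i V)))
  + (1/4) * (\sum_i \sum_j x i * x j *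
       (ip G (lbr c (row i V) (row j V)) X * ip G (lbr c (row i V) (row j V)) Y)).
Proof.
have sqrtK i : Num.sqrt (x i) * Num.sqrt (x i) = x i by rewrite -expr2 sqr_sqrtr.
rewrite /ric (meanH0 w_gt0 c_graded) (killing0 w_gt0 c_graded) !lbr0l !ip0l.
rewrite !(mulr0, addr0, subr0); congr (_ * _ + _ * _).
  by apply: eq_bigr => i _; rewrite row_scaled_basis !lbrZr ipZl ipZr mulrA sqrtK.
apply: eq_bigr => i _; apply: eq_bigr => j _.
rewrite !row_scaled_basis !lbrZl !lbrZr !ipZl -[in RHS](sqrtK i) -[in RHS](sqrtK j); ring.
Qed.

End Ricci.

Section Orthonormal.
Variables (R : realType) (n : nat).

Lemma ip_gram_diag (W : 'M[R]_n) (d : 'rV[R]_n) u v :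
  ip (W *m diag_mx d *m W^T) u v = \sum_k (u *m W) 0 k * d 0 k * (v *m W) 0 k.
Proof.
rewrite /ip !mulmxA -(mulmxA _ W^T) -trmx_mul mul_mx_diag mxE.
by apply: eq_bigr => k _; rewrite !mxE.
Qed.

Lemma posdef_gram (C : 'M[R]_n) : C \in unitmx -> posdef (C *m C^T).
Proof.
move=> C_unit; split; first by rewrite trmx_mul trmxK.
move=> v v_neq0; rewrite /ip mulmxA -(mulmxA (v *m C)) -trmx_mul mxE.
have vC_neq0 : v *m C != 0.
  by apply: contra v_neq0 => /eqP vC0; rewrite -(mulmxK C_unit v) vC0 mul0mx.
under eq_bigr => j _ do rewrite [_^T _ _]mxE -expr2.
rewrite lt_def sumr_ge0 ?andbT => [|j _]; last exact: sqr_ge0.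
apply: contra vC_neq0 => /eqP sum0; apply/eqP/rowP => j; rewrite [RHS]mxE.
by apply/eqP; rewrite -sqrf_eq0 (psumr_eq0P (fun j _ => sqr_ge0 _) sum0).
Qed.

Lemma orthonormal_posdef (G B : 'M[R]_n) : orthonormal_basis G B -> posdef G.
Proof.
rewrite /orthonormal_basis => BGB.
have B_unit : B \in unitmx.
  rewrite unitmxE unitfE; apply/eqP => det0; move: (congr1 determinant BGB).
  by rewrite !det_mulmx det0 !mul0r det1 => /eqP; rewrite eq_sym oner_eq0.
have -> : G = invmx B *m (invmx B)^T.
  rewrite trmx_inv -(mul1mx (invmx B^T)) -BGB !mulmxA mulVmx // mul1mx.
  by rewrite mulmxK // unitmx_tr.
by apply: posdef_gram; rewrite unitmx_inv.
Qed.

Lemma orthonormal_scaled_basis (x : 'I_n -> R) (V W : 'M[R]_n) :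
  (forall i, 0 < x i) -> V *m W = 1%:M ->
  orthonormal_basis (W *m diag_mx (\row_i (x i)^-1) *m W^T)
                    (diag_mx (\row_i Num.sqrt (x i)) *m V).
Proof.
move=> x_gt0 VW; rewrite /orthonormal_basis !trmx_mul tr_diag_mx !mulmxA.
rewrite -(mulmxA _ V W) VW mulmx1 -(mulmxA _ W^T) -trmx_mul VW trmx1 mulmx1.
rewrite !mulmx_diag -diag_const_mx; congr diag_mx; apply/rowP => i; rewrite !mxE.
by rewrite mulrAC -expr2 sqr_sqrtr ?mulfV // ?gt_eqF // ltW.
Qed.

End Orthonormal.

Lemma exchange_big4 (R : realType) (I : finType) (F : I -> I -> I -> I -> R) :
  \sum_i \sum_j \sum_a \sum_b F i j a b = \sum_a \sum_b \sum_i \sum_j F i j a b.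
Proof.
under eq_bigr => i _ do rewrite exchange_big; rewrite exchange_big.
under eq_bigr => a _ do under eq_bigr => i _ do rewrite exchange_big.
by under eq_bigr => a _ do rewrite exchange_big.
Qed.

Lemma exchange_big_bilinear (R : realType) (I : finType) (p q : I -> R) (f g : I -> I -> I -> R) :
  \sum_i \sum_j (\sum_a p a * f i j a) * (\sum_b q b * g i j b) =
  \sum_a \sum_b p a * q b * \sum_i \sum_j f i j a * g i j b.
Proof.
under eq_bigr => i _ do under eq_bigr => j _ do rewrite big_distrlr.
rewrite exchange_big4; apply: eq_bigr => a _; apply: eq_bigr => b _.
rewrite mulr_sumr; apply: eq_bigr => i _; rewrite mulr_sumr.
by apply: eq_bigr => j _ /=; ring.
Qed.

Section Frame.
Variables (R : realType) (n : nat) (c : 'I_n -> 'I_n -> 'rV[R]_n) (w : 'I_n -> nat).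
Hypothesis w_gt0 : forall k, (0 < w k)%N.
Hypothesis c_graded : forall i j k, c i j 0 k != 0 -> w k = (w i + w j)%N.
Variables (V W : 'M[R]_n) (x : 'I_n -> R) (m : 'I_n -> 'I_n -> 'I_n -> R).
Hypothesis x_gt0 : forall i, 0 < x i.
Hypothesis VW : V *m W = 1%:M.
Hypothesis m_frame : forall i j, lbr c (row i V) (row j V) *m W = \row_k m i j k.

Let G := W *m diag_mx (\row_i (x i)^-1) *m W^T.
Let B := diag_mx (\row_i Num.sqrt (x i)) *m V.

Lemma frame_coordsK (u : 'rV[R]_n) : u = u *m W *m V.
Proof. by rewrite -mulmxA (mulmx1C VW) mulmx1. Qed.

Lemma lbr_frame u v k :
  (lbr c u v *m W) 0 k = \sum_a \sum_b (u *m W) 0 a * (v *m W) 0 b * m a b k.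
Proof.
rewrite {1}(frame_coordsK u) {1}(frame_coordsK v) lbr_mulmx mulmx_suml summxE.
apply: eq_bigr => a _; rewrite mulmx_suml summxE; apply: eq_bigr => b _.
by rewrite -scalemxAl m_frame !mxE.
Qed.

Lemma lbr_frame_row u i k : (lbr c u (row i V) *m W) 0 k = \sum_a (u *m W) 0 a * m a i k.
Proof.
rewrite lbr_frame; apply: eq_bigr => a _; rewrite (bigD1 i) //= big1 => [|b ne_bi].
  by rewrite -row_mul VW !mxE eqxx mulr1n mulr1 addr0.
by rewrite -row_mul VW !mxE eq_sym (negbTE ne_bi) mulr0n mulr0 mul0r.
Qed.

Lemma ip_frame u v : ip G u v = \sum_k (u *m W) 0 k * (v *m W) 0 k / x k.
Proof. by rewrite ip_gram_diag; apply: eq_bigr => k _; rewrite [(\row__ _) 0 k]mxE mulrAC. Qed.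

Lemma ip_frame_bracket i j u :
  ip G (lbr c (row i V) (row j V)) u = \sum_k m i j k * (u *m W) 0 k / x k.
Proof. by rewrite ip_frame m_frame; apply: eq_bigr => k _; rewrite mxE. Qed.

(* [frame_ricci a b] is ric(v_a, v_b) for the frame v_i = row i V, which is G-orthogonal
   with |v_i|^2 = 1 / x i and satisfies [v_i, v_j] = \sum_k m i j k v_k. *)
Definition frame_ricci a b :=
  - (1/2) * (\sum_i \sum_j x i / x j * m a i j * m b i j)
  + 1/4 * (\sum_i \sum_j x i * x j / (x a * x b) * m i j a * m i j b).

Lemma frame_ricciC a b : frame_ricci a b = frame_ricci b a.
Proof.
rewrite /frame_ricci; congr (_ * _ + _ * _).
  by apply: eq_bigr => i _; apply: eq_bigr => j _; ring.
by apply: eq_bigr => i _; apply: eq_bigr => j _; rewrite [x a * _]mulrC; ring.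
Qed.

Lemma frame_adjoint_sum X Y :
  \sum_i x i * ip G (lbr c X (row i V)) (lbr c Y (row i V)) =
  \sum_a \sum_b (X *m W) 0 a * (Y *m W) 0 b * \sum_i \sum_j x i / x j * m a i j * m b i j.
Proof.
set p := X *m W; set q := Y *m W.
rewrite -(exchange_big_bilinear (p 0) (q 0) (fun i j a => x i / x j * m a i j)
                                            (fun i j b => m b i j)).
apply: eq_bigr => i _; rewrite ip_frame mulr_sumr; apply: eq_bigr => j _.
rewrite !lbr_frame_row -/p -/q.
have -> : \sum_a p 0 a * (x i / x j * m a i j) = x i / x j * \sum_a p 0 a * m a i j.
  by rewrite mulr_sumr; apply: eq_bigr => a _; ring.
ring.
Qed.

Lemma frame_bracket_sum X Y :
  \sum_i \sum_j x i * x j *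
    (ip G (lbr c (row i V) (row j V)) X * ip G (lbr c (row i V) (row j V)) Y) =
  \sum_a \sum_b (X *m W) 0 a * (Y *m W) 0 b *
    \sum_i \sum_j x i * x j / (x a * x b) * m i j a * m i j b.
Proof.
set p := X *m W; set q := Y *m W.
have split_x a b : \sum_i \sum_j x i * x j / (x a * x b) * m i j a * m i j b =
    \sum_i \sum_j (x i * x j / x a * m i j a) * (m i j b / x b).
  by apply: eq_bigr => i _; apply: eq_bigr => j _; field; rewrite !gt_eqF.
under [RHS]eq_bigr => a _ do under eq_bigr => b _ do rewrite split_x.
rewrite -(exchange_big_bilinear (p 0) (q 0) (fun i j a => x i * x j / x a * m i j a)
                                            (fun i j b => m i j b / x b)).
apply: eq_bigr => i _; apply: eq_bigr => j _; rewrite !ip_frame_bracket -/p -/q.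
have -> : \sum_a p 0 a * (x i * x j / x a * m i j a) = x i * x j * \sum_k m i j k * p 0 k / x k.
  by rewrite mulr_sumr; apply: eq_bigr => a _; ring.
have -> : \sum_b q 0 b * (m i j b / x b) = \sum_k m i j k * q 0 k / x k.
  by apply: eq_bigr => b _; ring.
ring.
Qed.

Lemma ric_frame X Y :
  ric G B c X Y = \sum_a \sum_b (X *m W) 0 a * (Y *m W) 0 b * frame_ricci a b.
Proof.
rewrite (ric_scaled_basis w_gt0 c_graded) => [|i]; last exact/ltW.
rewrite frame_adjoint_sum frame_bracket_sum !mulr_sumr -big_split; apply: eq_bigr => a _.
rewrite !mulr_sumr -big_split; apply: eq_bigr => b _.
by rewrite /frame_ricci /=; ring.
Qed.

Lemma ip_frame_eigen Ric (l : 'I_n -> R) X Y : V *m Ric = diag_mx (\row_k l k) *m V ->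
  ip G (X *m Ric) Y = \sum_a (X *m W) 0 a * (Y *m W) 0 a * l a / x a.
Proof.
move=> VRic; rewrite ip_frame; apply: eq_bigr => a _.
rewrite {1}(frame_coordsK X) -(mulmxA _ V Ric) VRic mulmxA -(mulmxA _ V W) VW mulmx1.
by rewrite mul_mx_diag !mxE; ring.
Qed.

Lemma ricci_op_frame Ric (l : 'I_n -> R) : V *m Ric = diag_mx (\row_k l k) *m V ->
  (forall a b, frame_ricci a b = if a == b then l a / x a else 0) ->
  is_ricci_op G B c Ric.
Proof.
move=> VRic ricci_eqs X Y; rewrite (ip_frame_eigen _ _ VRic) ric_frame.
apply: eq_bigr => a _; rewrite (bigD1 a) //= big1 => [|b ne_ba].
  by rewrite ricci_eqs eqxx addr0 mulrA.
by rewrite ricci_eqs eq_sym (negbTE ne_ba) mulr0.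
Qed.

End Frame.

Section Coordinates.
Variable R : realType.

(* Coordinates are indexed by nat so that tables defined by pattern matching compute;
   only k < 7 is meaningful. *)
Definition ent (u : 'rV[R]_7) (k : nat) : R := u 0 (inord k).
Arguments ent : simpl never.

Lemma sum7 (F : 'I_7 -> R) : \sum_(i < 7) F i =
  F (inord 0) + F (inord 1) + F (inord 2) + F (inord 3) + F (inord 4) + F (inord 5) + F (inord 6).
Proof.
rewrite !big_ord_recl big_ord0 addr0 !addrA.
by congr (_ + _ + _ + _ + _ + _ + _); congr F; apply/val_inj; rewrite /= inordK.
Qed.

Lemma forall_lt7 (P : nat -> Prop) :
  P 0%N -> P 1%N -> P 2%N -> P 3%N -> P 4%N -> P 5%N -> P 6%N -> forall m, (m < 7)%N -> P m.
Proof. by move=> ? ? ? ? ? ? ? [|[|[|[|[|[|[|m]]]]]]]. Qed.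

Lemma rowP7 (u v : 'rV[R]_7) : (forall m, (m < 7)%N -> ent u m = ent v m) -> u = v.
Proof. by move=> uv; apply/rowP => k; rewrite -[k]inord_val; apply: uv. Qed.

Lemma matrixP7 (M N : 'M[R]_7) :
  (forall a b, (a < 7)%N -> (b < 7)%N -> M (inord a) (inord b) = N (inord a) (inord b)) -> M = N.
Proof. by move=> MN; apply/matrixP => i j; rewrite -[i]inord_val -[j]inord_val; apply: MN. Qed.

Lemma entD (u v : 'rV[R]_7) m : ent (u + v) m = ent u m + ent v m.
Proof. by rewrite /ent mxE. Qed.

Lemma ent0 m : ent (0 : 'rV[R]_7) m = 0.
Proof. by rewrite /ent mxE. Qed.

Lemma ent_mulmx (u : 'rV[R]_7) (M : 'M[R]_7) m : ent (u *m M) m =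
  ent u 0 * M (inord 0) (inord m) + ent u 1 * M (inord 1) (inord m) +
  ent u 2 * M (inord 2) (inord m) + ent u 3 * M (inord 3) (inord m) +
  ent u 4 * M (inord 4) (inord m) + ent u 5 * M (inord 5) (inord m) +
  ent u 6 * M (inord 6) (inord m).
Proof. by rewrite /ent mxE sum7. Qed.

Definition mx7 (f : nat -> nat -> R) : 'M[R]_7 := \matrix_(i < 7, j < 7) f i j.

Lemma mx7E f a b : (a < 7)%N -> (b < 7)%N -> mx7 f (inord a) (inord b) = f a b.
Proof. by move=> Ha Hb; rewrite mxE !inordK. Qed.

End Coordinates.

Section Algebra7.
Variable R : realType.

Definition n7_coef_up (a b m : nat) : R :=
  match a, b, m with
  | 0, 1, 2 => 1
  | 0, 2, 3 => 1
  | 0, 3, 5 => 1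
  | 1, 2, 4 => 1
  | 1, 4, 6 => -1
  | 1, 5, 6 => -1
  | 2, 3, 6 => 1
  | _, _, _ => 0
  end.

Lemma up7_entry a b m : (m < 7)%N -> up7 R a b 0 (inord m) = n7_coef_up a b m.
Proof.
move=> Hm; case: a => [|[|[|a]]]; case: b => [|[|[|[|[|[|b]]]]]];
  rewrite /up7 /e7 /bvec ?mxE ?eqxx //=;
  by case: m Hm => [|[|[|[|[|[|[|m]]]]]]] //= _; rewrite -(inj_eq val_inj) /= !inordK //= ?oppr0.
Qed.

Definition n7_coef_skew (a b m : nat) : R :=
  if (a < b)%N then n7_coef_up a b m else if (b < a)%N then - n7_coef_up b a m else 0.

Lemma n7_entry (i j : 'I_7) m : (m < 7)%N -> n7 R i j 0 (inord m) = n7_coef_skew i j m.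
Proof.
move=> Hm; rewrite /n7 /n7_coef_skew; case: ifP => _; first exact: up7_entry.
by case: ifP => _; rewrite mxE ?up7_entry.
Qed.

Definition wt7 (k : nat) : nat := nth 0%N [:: 1; 2; 3; 4; 5; 5; 7]%N k.

Lemma wt7_gt0 (k : 'I_7) : (0 < wt7 k)%N.
Proof. by case: k => [[|[|[|[|[|[|[|k]]]]]]]]. Qed.

Lemma n7_graded (i j k : 'I_7) : n7 R i j 0 k != 0 -> wt7 k = (wt7 i + wt7 j)%N.
Proof.
rewrite -{1}[k]inord_val n7_entry //.
case: i => [[|[|[|[|[|[|[|//]]]]]]] ?]; case: j => [[|[|[|[|[|[|[|//]]]]]]] ?];
  case: k => [[|[|[|[|[|[|[|//]]]]]]] ?]; by rewrite /n7_coef_skew /= ?oppr0 ?eqxx.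
Qed.

Definition n7_bracket_entry (u v : 'rV[R]_7) (k : nat) : R :=
  match k with
  | 2 => ent u 0 * ent v 1 - ent u 1 * ent v 0
  | 3 => ent u 0 * ent v 2 - ent u 2 * ent v 0
  | 4 => ent u 1 * ent v 2 - ent u 2 * ent v 1
  | 5 => ent u 0 * ent v 3 - ent u 3 * ent v 0
  | 6 => - (ent u 1 * ent v 4 - ent u 4 * ent v 1) - (ent u 1 * ent v 5 - ent u 5 * ent v 1)
         + (ent u 2 * ent v 3 - ent u 3 * ent v 2)
  | _ => 0
  end.

Lemma ent_lbr_n7 u v m : (m < 7)%N -> ent (lbr (@n7 R) u v) m = n7_bracket_entry u v m.
Proof.
move=> Hm; rewrite {1}/ent lbrE.
under eq_bigr => i _ do under eq_bigr => j _ do rewrite n7_entry //.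
by rewrite !sum7 !inordK //; move: m Hm; apply: forall_lt7; rewrite /n7_coef_skew /= /ent; ring.
Qed.

Lemma lie_n7 : is_lie (@n7 R).
Proof.
split=> [u | u v w]; apply: rowP7; apply: forall_lt7;
  rewrite ?entD ent0 !ent_lbr_n7 //= ?ent_lbr_n7 //=; ring.
Qed.

End Algebra7.

Section Metric7.
Variable R : realType.

(* The rows of V7, i.e. e1, e2, e3, e4, e6, e5 + mu7 e6, e7, are G7-orthogonal with
   |v_i|^2 = 1 / x7 i; W7 is the inverse of V7. *)
Definition x7 (a : nat) : R :=
  match a with
  | 0 => 13 * 13 * 23 * 41 / 19
  | 1 => 13 * 23 * 41 / (3 * 19)
  | 2 => 13 * 41 / 19
  | 3 => 3
  | 4 => 9 * 19 / (8 * 53)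
  | 5 => 2 * 53 / (11 * 23)
  | _ => 19 / (4 * 11 * 13 * 23)
  end.

Arguments x7 : simpl never.

Definition mu7 : R := - (9 * 19) / (4 * 53).

Definition V7 : 'M[R]_7 := mx7 (fun a b =>
  match a, b with
  | 0, 0 | 1, 1 | 2, 2 | 3, 3 | 4, 5 | 5, 4 | 6, 6 => 1
  | 5, 5 => mu7
  | _, _ => 0
  end).

Definition W7 : 'M[R]_7 := mx7 (fun a b =>
  match a, b with
  | 0, 0 | 1, 1 | 2, 2 | 3, 3 | 4, 5 | 5, 4 | 6, 6 => 1
  | 4, 4 => - mu7
  | _, _ => 0
  end).

Definition G7 : 'M[R]_7 := W7 *m diag_mx (\row_i (x7 i)^-1) *m W7^T.
Definition B7 : 'M[R]_7 := diag_mx (\row_i Num.sqrt (x7 i)) *m V7.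

Definition n7_frame_coef_up (a b k : nat) : R :=
  match a, b, k with
  | 0, 1, 2 | 0, 2, 3 | 0, 3, 4 | 1, 2, 5 | 2, 3, 6 => 1
  | 1, 2, 4 => - mu7
  | 1, 4, 6 => -1
  | 1, 5, 6 => - (1 + mu7)
  | _, _, _ => 0
  end.

Definition n7_frame_coef (a b k : nat) : R :=
  if (a < b)%N then n7_frame_coef_up a b k else if (b < a)%N then - n7_frame_coef_up b a k else 0.

Definition t7 : R := 3 * 13 * 13 * 23 * 41 * 41 / (2 * 19 * 19).
Definition c7 : R := - (43 * 13 * 13 * 23 * 41 * 41) / (6 * 19 * 19).
Definition l7 (k : nat) : R := c7 + t7 * (wt7 k)%:R.
Definition D7 : 'M[R]_7 := diag_mx (\row_k (t7 * (wt7 k)%:R)).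

Lemma x7_gt0 (i : 'I_7) : 0 < x7 i.
Proof. by case: i => [[|[|[|[|[|[|[|i]]]]]]] Hi] //; rewrite /x7 /=; lra. Qed.

Lemma V7W7 : V7 *m W7 = 1%:M.
Proof.
apply: matrixP7 => a b Ha Hb; rewrite [LHS]mxE sum7 !mx7E ?inordK // !mxE.
rewrite -(inj_eq val_inj) /= !inordK //.
by move: a Ha; apply: forall_lt7; move: b Hb; apply: forall_lt7; rewrite /mu7 /=; ring.
Qed.

Lemma n7_frame (i j : 'I_7) : lbr (@n7 R) (row i V7) (row j V7) *m W7 = \row_k n7_frame_coef i j k.
Proof.
apply: rowP7 => k Hk; rewrite ent_mulmx !mx7E // !ent_lbr_n7 //; cbn [n7_bracket_entry].
rewrite /ent /V7 /mx7 !mxE !inordK //.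
case: i => [[|[|[|[|[|[|[|//]]]]]]] ?]; case: j => [[|[|[|[|[|[|[|//]]]]]]] ?];
  move: k Hk; apply: forall_lt7; rewrite /n7_frame_coef /=; ring.
Qed.

Lemma V7_eigen : V7 *m (c7%:M + D7) = diag_mx (\row_k l7 k) *m V7.
Proof.
rewrite mulmxDr mul_mx_scalar mul_mx_diag mul_diag_mx.
apply: matrixP7 => a b Ha Hb; rewrite !mxE !inordK // /l7.
by move: a Ha; apply: forall_lt7; move: b Hb; apply: forall_lt7; rewrite /=; ring.
Qed.

Lemma frame_ricci7 (a b : 'I_7) :
  frame_ricci (fun i : 'I_7 => x7 i) (fun i j k : 'I_7 => n7_frame_coef i j k) a b =
  if a == b then l7 a / x7 a else 0.
Proof.
wlog le_ab : a b / (a <= b)%N.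
  move=> sym; case: (leqP a b) => [/sym // | /ltnW /sym].
  by rewrite frame_ricciC eq_sym => ->; case: eqP => // ->.
rewrite /frame_ricci !sum7 !inordK //; move: le_ab.
case: a => [[|[|[|[|[|[|[|//]]]]]]] ?]; case: b => [[|[|[|[|[|[|[|//]]]]]]] ?] //= _;
  by rewrite /n7_frame_coef /= /l7 /wt7 /t7 /c7 /mu7 /x7 /=; field.
Qed.

End Metric7.

Theorem mainTheorem12 (R : realType) : einstein_nilradical (@n7 R).
Proof.
have graded := @n7_graded R.
have orthonormal := orthonormal_scaled_basis (@x7_gt0 R) (V7W7 R).
split; first exact: lie_n7.
split; first exact: graded_nilpotent wt7_gt0 graded.
exists (G7 R), (B7 R); split; first exact: orthonormal_posdef orthonormal.
split; first exact: orthonormal.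
exists ((c7 R)%:M + D7 R), (c7 R), (D7 R); split.
  apply: (ricci_op_frame wt7_gt0 graded (@x7_gt0 R) (V7W7 R) (@n7_frame R) (V7_eigen R)).
  exact: frame_ricci7.
by split; first exact: graded_derivation graded (t7 R).
Qed.
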